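(* For any $n\in\mathbb{N}$, the monoid $\mathrm{lps}_n$ has finite derivation type.
   Context: Let $\mathcal{A}_n=\{1<2<\cdots<n\}$. An lPS tableau is a finite (possibly empty) sequence of nonempty bottom-justified columns of boxes filled with positive integers, such that the entries of each column are strictly decreasing from top to bottom and the bottom entries of the columns form a weakly increasing sequence from left to right. Right insertion of a symbol $a$ into an lPS tableau $B$: if $a$ is greater than or equal to every entry of the bottom row, append a new column consisting of $a$ at the right end; otherwise, let $z$ be the leftmost bottom-row entry with $z>a$ and put $a$ in a new box at the bottom of the column of $z$ (the previous entries of that column move up one box). For $w=w_1\cdots w_k$, $\mathfrak{R}_\ell(w)$ is obtained by starting with the empty tableau and right-inserting $w_1,\dots,w_k$ in order. The monoid $\mathrm{lps}_n$ is the quotient of $\mathcal{A}_n^*$ by the congruence $u\equiv v\iff\mathfrak{R}_\ell(u)=\mathfrak{R}_\ell(v)$. Finite derivation type is Squier's homotopical finiteness property of finitely presented monoids. *)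

From Stdlib Require List.
From mathcomp Require Import all_boot.
Set Implicit Arguments. Unset Strict Implicit. Unset Printing Implicit Defensive.

(* The alphabet A_n = {1 < ... < n} is represented by 'I_n (value k stands    *)
(* for the letter k+1; the order is the same).                               *)
(* An lPS tableau is a list of columns (left to right); each column is a     *)
(* list of its entries read from the BOTTOM box upwards, so the head of a    *)
(* column is its bottom-row entry.                                           *)

Definition lps_tableau (n : nat) := seq (seq 'I_n).

Fixpoint lps_rins (n : nat) (B : lps_tableau n) (a : 'I_n) : lps_tableau n :=
  match B with
  | [::] => [:: [:: a]]
  | c :: B' =>
      match c with
      | z :: _ => if (a < z)%N then (a :: c) :: B' else c :: lps_rins B' a
      | [::] => c :: lps_rins B' a
      end
  end.

Definition lps_Rl (n : nat) (w : seq 'I_n) : lps_tableau n :=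
  foldl (@lps_rins n) [::] w.

Definition lps_cong (n : nat) (u v : seq 'I_n) : Prop := lps_Rl u = lps_Rl v.

Section Squier.
Variable m : nat.
Local Notation word := (seq 'I_m).
Variable R : seq (word * word).

(* An edge (x, rho, dir, y) of the derivation graph: rho = (l, r) in R,     *)
(* dir = true : x l y -> x r y ;  dir = false : x r y -> x l y.             *)
Record edge := Edge { e_left : word; e_rule : word * word;
                      e_dir : bool; e_right : word }.

Definition edge_ok (e : edge) : Prop := List.In (e_rule e) R.

Definition e_src (e : edge) : word :=
  e_left e ++ (if e_dir e then (e_rule e).1 else (e_rule e).2) ++ e_right e.
Definition e_tgt (e : edge) : word :=
  e_left e ++ (if e_dir e then (e_rule e).2 else (e_rule e).1) ++ e_right e.

Definition e_inv (e : edge) : edge :=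
  Edge (e_left e) (e_rule e) (~~ e_dir e) (e_right e).

Definition e_whisk (x y : word) (e : edge) : edge :=
  Edge (x ++ e_left e) (e_rule e) (e_dir e) (e_right e ++ y).

Fixpoint is_path (s : word) (p : seq edge) (t : word) : Prop :=
  match p with
  | [::] => s = t
  | e :: p' => edge_ok e /\ e_src e = s /\ is_path (e_tgt e) p' t
  end.

Definition thue_conv (u v : word) : Prop := exists p, is_path u p v.

(* A homotopy basis candidate: triples (s, p, q) of paths from s.        *)
Variable P : seq (word * seq edge * seq edge).

Inductive homot : word -> seq edge -> seq edge -> Prop :=
| homot_refl s p t : is_path s p t -> homot s p p
| homot_sym s p q : homot s p q -> homot s q p
| homot_trans s p q r : homot s p q -> homot s q r -> homot s p r
| homot_basis s p q : List.In (s, p, q) P -> homot s p q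
| homot_inv e : edge_ok e -> homot (e_src e) [:: e; e_inv e] [::]
| homot_peiffer e1 e2 : edge_ok e1 -> edge_ok e2 ->
    homot (e_src e1 ++ e_src e2)
          [:: e_whisk [::] (e_src e2) e1; e_whisk (e_tgt e1) [::] e2]
          [:: e_whisk (e_src e1) [::] e2; e_whisk [::] (e_tgt e2) e1]
| homot_whisk x y s p q : homot s p q ->
    homot (x ++ s ++ y) (map (e_whisk x y) p) (map (e_whisk x y) q)
| homot_comp u r s p q t w v :
    is_path u r s -> is_path s p t -> is_path s q t -> is_path t w v ->
    homot s p q -> homot u (r ++ p ++ w) (r ++ q ++ w).

Definition homotopy_basis : Prop :=
  (forall s p q, List.In (s, p, q) P ->
     exists t, is_path s p t /\ is_path s q t) /\
  (forall s t p q, is_path s p t -> is_path s q t -> homot s p q).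

End Squier.

(* Finite derivation type for the monoid M = A^* / eqv (eqv a congruence on *)
(* the free monoid over the finite alphabet A): there is a finite           *)
(* presentation <B | R> of M (B = 'I_m, g sends generators to words         *)
(* representing them, inducing an isomorphism B^*/R ~= A^*/eqv) whose      *)
(* derivation graph admits a finite homotopy basis P.                        *)

Definition presents (A : finType) (eqv : seq A -> seq A -> Prop)
  (m : nat) (g : 'I_m -> seq A) (R : seq (seq 'I_m * seq 'I_m)) : Prop :=
  (forall w : seq A, exists u : seq 'I_m, eqv (flatten (map g u)) w) /\
  (forall u v : seq 'I_m,
     eqv (flatten (map g u)) (flatten (map g v)) <-> thue_conv R u v).

Definition finite_derivation_type (A : finType)
  (eqv : seq A -> seq A -> Prop) : Prop :=
  exists (m : nat) (g : 'I_m -> seq A) (R : seq (seq 'I_m * seq 'I_m))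
         (P : seq (seq 'I_m * seq (edge m) * seq (edge m))),
    presents eqv g R /\ homotopy_basis R P.

(* The columns (subsets of {1, ..., n}, the empty one included) generate lps_n, and a word
   of columns is irreducible exactly when it is an lPS tableau.  Rewriting every non-tableau
   word of one or two columns to the columns of its insertion tableau gives a finite
   rewriting system.  It terminates because each step lowers the sum over the columns of
   (position * size) plus the number of columns, and u |-> R_l(u) is a normal-form function
   for it because R_l(w) = R_l(reading(R_l(w))) after any prefix.
   Squier's argument then works for any terminating system with left-hand sides of length
   at most k: every path is homotopic to leftmost reductions of its ends, since a step and
   the leftmost step out of the same word either act on disjoint factors (a Peiffer square)
   or overlap inside a factor of length at most 2k, and the finitely many such factors
   contribute one basis 2-cell per step. *)

From mathcomp Require Import all_boot zify.
Set Implicit Arguments. Unset Strict Implicit. Unset Printing Implicit Defensive.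

(** * Right insertion and lPS tableaux *)

Section LPSTableau.
Variable n : nat.
Local Notation tableau := (seq (seq 'I_n)).
Local Notation rins := (@lps_rins n).

Definition ord_lt : rel 'I_n := fun a b => (a < b)%N.

Lemma ord_lt_trans : transitive ord_lt.
Proof. by move=> b a c; apply: ltn_trans. Qed.

(* Right insertion of [y] does not stop at column [c]. *)
Definition passes (y : 'I_n) (c : seq 'I_n) : bool :=
  if c is z :: _ then (z <= y)%N else true.

Definition above (z : 'I_n) (T : tableau) : bool :=
  all (all (fun y : 'I_n => (z <= y)%N)) T.

Fixpoint is_lps_tableau (T : tableau) : bool :=
  if T is c :: T' then
    (if c is z :: _ then sorted ord_lt c && above z T' else false) && is_lps_tableau T'
  else true.

Definition reading (T : tableau) : seq 'I_n := flatten (map rev T).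

Lemma reading_cons c (T : tableau) : reading (c :: T) = rev c ++ reading T.
Proof. by []. Qed.

Lemma rins_cat_passed (A B : tableau) y :
  all (passes y) A -> rins (A ++ B) y = A ++ rins B y.
Proof.
elim: A => [|c A IH] //= /andP [Hc HA].
case: c Hc => [|z c] /= Hc; first by rewrite IH.
by rewrite ltnNge Hc /= IH.
Qed.

Lemma rins_cat_caught (A B : tableau) x :
  has (fun c => ~~ passes x c) A -> rins (A ++ B) x = rins A x ++ B.
Proof.
elim: A => [|c A IH] //= /orP [Hc|HA].
  by case: c Hc => [|z c] //= Hc; rewrite ltnNge Hc.
case: c => [|z c] /=; first by rewrite IH.
by case: ifP => // _; rewrite IH.
Qed.

Lemma passes_rins (A : tableau) (x y : 'I_n) :
  all (passes y) A -> (x <= y)%N -> all (passes y) (rins A x).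
Proof.
elim: A => [|c A IH] /=; first by move=> _ ->.
move=> /andP [Hc HA] Hxy.
case: c Hc => [|z c] /= Hc; first by rewrite IH.
by case: ifP => /= _; rewrite ?Hxy ?HA ?Hc ?IH.
Qed.

Lemma passes_trans (A : tableau) (z y : 'I_n) :
  all (passes z) A -> (z <= y)%N -> all (passes y) A.
Proof.
move=> /allP H Hzy; apply/allP => c /H.
by case: c => //= w _ Hw; apply: leq_trans Hw Hzy.
Qed.

Lemma rins_split (T : tableau) (b : 'I_n) : exists A B,
  [/\ rins T b = A ++ B, all (passes b) A &
      forall x : 'I_n, (x < b)%N -> has (fun c => ~~ passes x c) A].
Proof.
elim: T => [|c T [A [B [E HA Hcatch]]]] /=.
  by exists [:: [:: b]], [::]; rewrite /= leqnn; split=> // x; rewrite orbF -ltnNge.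
case: c => [|z c].
  by exists ([::] :: A), B; rewrite E /= HA; split=> // x /Hcatch ->; rewrite orbT.
case: ifP => Hbz.
  by exists [:: b :: z :: c], T; rewrite /= leqnn; split=> // x; rewrite orbF -ltnNge.
exists ((z :: c) :: A), B; rewrite E /= HA leqNgt Hbz; split=> // x /Hcatch ->.
by rewrite orbT.
Qed.

Lemma foldl_rins_cat_passed (A B : tableau) ys :
  (forall y, y \in ys -> all (passes y) A) ->
  foldl rins (A ++ B) ys = A ++ foldl rins B ys.
Proof.
elim: ys B => [|y ys IH] B //= H.
rewrite rins_cat_passed ?IH //; first by move=> z Hz; apply: H; rewrite inE Hz orbT.
by apply: H; rewrite inE eqxx.
Qed.

Lemma above_reading (T : tableau) (z y : 'I_n) : above z T -> y \in reading T -> (z <= y)%N.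
Proof.
elim: T => [|c T IH] //= /andP [Hc HT]; rewrite mem_cat => /orP [Hy|Hy]; last exact: IH.
by move/allP: Hc; apply; rewrite -mem_rev.
Qed.

Lemma above_rins (T : tableau) (x z : 'I_n) : above z T -> (z <= x)%N -> above z (rins T x).
Proof.
elim: T => [|d T IH] /=; first by move=> _ ->.
case/andP=> Hd HT Hzx; case: d Hd => [|w d] Hd /=; first by rewrite IH.
by case: ifP => _ /=; move: Hd => /= Hd; rewrite ?Hd ?HT ?IH ?Hzx.
Qed.

Lemma is_lps_tableau_rins (T : tableau) x : is_lps_tableau T -> is_lps_tableau (rins T x).
Proof.
elim: T => [|c T IH] //=.
case: c => [|z c] //= /andP [/andP [Hs Hab] HT].
case: ifP => Hxz /=.
  rewrite /ord_lt Hxz Hs HT /= andbT.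
  by apply: sub_all _ Hab => d; apply: sub_all => y; apply: leq_trans (ltnW Hxz).
by rewrite Hs IH // andbT /= above_rins // leqNgt Hxz.
Qed.

Lemma is_lps_tableau_Rl (w : seq 'I_n) : is_lps_tableau (lps_Rl w).
Proof.
rewrite /lps_Rl; elim/last_ind: w => [|w x IH] //.
by rewrite -cats1 foldl_cat /=; apply: is_lps_tableau_rins.
Qed.

Lemma foldl_rins_reading_rcons (S T : tableau) x : is_lps_tableau S ->
  foldl rins T (reading S ++ [:: x]) = foldl rins T (reading (rins S x)).
Proof.
elim: S T => [|c S IH] T //=.
case: c => [|z c] //= /andP [/andP [_ Hab] HS].
case: ifP => Hxz /=; last by rewrite !reading_cons -catA foldl_cat IH // foldl_cat.
rewrite !reading_cons (rev_cons x) -cats1 -!catA !foldl_cat rev_cons -cats1 foldl_cat /=.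
have [A [B [-> HA Hcatch]]] := rins_split (foldl rins T (rev c)) z.
have HpassS y : y \in reading S -> all (passes y) A.
  by move=> Hy; apply: passes_trans HA (above_reading Hab Hy).
rewrite foldl_rins_cat_passed // !rins_cat_caught ?Hcatch // foldl_rins_cat_passed //.
move=> y Hy; apply: passes_rins; first exact: HpassS.
exact: leq_trans (ltnW Hxz) (above_reading Hab Hy).
Qed.

Lemma foldl_rins_Rl (T : tableau) u : foldl rins T u = foldl rins T (reading (lps_Rl u)).
Proof.
elim/last_ind: u => [|u x IH] //.
rewrite -cats1 foldl_cat IH -foldl_cat foldl_rins_reading_rcons ?is_lps_tableau_Rl //.
by rewrite /lps_Rl foldl_cat.
Qed.

Lemma foldl_rins_column (T : tableau) c : sorted ord_lt c -> c != [::] ->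
  (forall y, y \in c -> all (passes y) T) -> foldl rins T (rev c) = T ++ [:: c].
Proof.
elim: c => [|z c IH] //= Hs _ H.
rewrite rev_cons -cats1 foldl_cat /=.
have HTz : all (passes z) T by apply: H; rewrite inE eqxx.
case: c IH Hs H => [|w c] IH Hs H; first by rewrite /= -[T]cats0 rins_cat_passed ?cats0.
move: Hs => /= /andP [Hzw Hs].
rewrite IH //; last by move=> y Hy; apply: H; rewrite inE Hy orbT.
by rewrite rins_cat_passed //= ifT.
Qed.

Lemma foldl_rins_reading (S T : tableau) : is_lps_tableau S ->
  (forall y, y \in reading S -> all (passes y) T) -> foldl rins T (reading S) = T ++ S.
Proof.
elim: S T => [|c S IH] T /=; first by rewrite cats0.
case: c => [|z c] //= /andP [/andP [Hs Hab] HS] H.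
rewrite foldl_cat foldl_rins_column //; last first.
  by move=> y Hy; apply: H; rewrite mem_cat mem_rev Hy.
rewrite IH -?catA // => y Hy; rewrite all_cat H /=; last by rewrite mem_cat Hy orbT.
by rewrite (above_reading Hab Hy).
Qed.

Lemma Rl_reading (S : tableau) : is_lps_tableau S -> lps_Rl (reading S) = S.
Proof. by move=> H; rewrite /lps_Rl foldl_rins_reading. Qed.

End LPSTableau.

Lemma InP (T : eqType) (x : T) (s : seq T) : reflect (List.In x s) (x \in s).
Proof.
elim: s => [|y s IH] /=; first by right.
rewrite inE; apply: (iffP orP) => [[/eqP ->|/IH]|[->|/IH]]; by [left | right | left | right].
Qed.

(** * Paths and homotopies in the derivation graph *)

Section DerivationGraph.
Variable m : nat.
Local Notation word := (seq 'I_m).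
Variable R : seq (word * word).
Local Notation edge := (edge m).
Local Notation is_path := (@is_path m R).
Local Notation edge_ok := (@edge_ok m R).

Lemma e_src_whisk x y (e : edge) : e_src (e_whisk x y e) = x ++ e_src e ++ y.
Proof. by rewrite /e_src /= -!catA. Qed.

Lemma e_tgt_whisk x y (e : edge) : e_tgt (e_whisk x y e) = x ++ e_tgt e ++ y.
Proof. by rewrite /e_tgt /= -!catA. Qed.

Lemma e_src_inv (e : edge) : e_src (e_inv e) = e_tgt e.
Proof. by rewrite /e_src /e_tgt /=; case: (e_dir e). Qed.

Lemma e_tgt_inv (e : edge) : e_tgt (e_inv e) = e_src e.
Proof. by rewrite /e_src /e_tgt /=; case: (e_dir e). Qed.

Lemma is_path_cat s p t q u : is_path s p t -> is_path t q u -> is_path s (p ++ q) u.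
Proof.
elim: p s => [|e p IH] s /=; first by move=> ->.
by move=> [? [? Hp]] Hq; do 2 split => //; apply: IH Hp Hq.
Qed.

Lemma is_path_tgt_uniq s p t t' : is_path s p t -> is_path s p t' -> t = t'.
Proof.
elim: p s => [|e p IH] s /=; first by move=> <- <-.
by move=> [_ [_ H]] [_ [_ H']]; apply: IH H H'.
Qed.

Lemma is_path_whisk x y s p t : is_path s p t ->
  is_path (x ++ s ++ y) (map (e_whisk x y) p) (x ++ t ++ y).
Proof.
elim: p s => [|e p IH] s /=; first by move=> ->.
move=> [He [<- Hp]]; rewrite e_src_whisk e_tgt_whisk; do 2 split => //; exact: IH.
Qed.

Definition path_inv (p : seq edge) : seq edge := rev (map (@e_inv m) p).

Lemma is_path_inv s p t : is_path s p t -> is_path t (path_inv p) s.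
Proof.
elim: p s => [|e p IH] s /=; first by move=> ->.
move=> [He [<- Hp]]; rewrite /path_inv /= rev_cons -cats1.
by apply: is_path_cat (IH _ Hp) _; rewrite /= e_src_inv e_tgt_inv.
Qed.

Section Homotopy.
Variable P : seq (word * seq edge * seq edge).
Hypothesis P_parallel : forall s p q, List.In (s, p, q) P ->
  exists t, is_path s p t /\ is_path s q t.
Local Notation homot := (@homot m R P).

Lemma homot_parallel s p q : homot s p q -> exists t, is_path s p t /\ is_path s q t.
Proof.
elim=> {s p q}.
- by move=> s p t H; exists t.
- by move=> s p q _ [t [H1 H2]]; exists t.
- move=> s p q r _ [t [H1 H2]] _ [t' [H3 H4]]; exists t; split => //.
  by rewrite (is_path_tgt_uniq H2 H3).
- exact: P_parallel.
- by move=> e He; exists (e_src e) => /=; rewrite e_src_inv e_tgt_inv.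
- move=> e1 e2 H1 H2; exists (e_tgt e1 ++ e_tgt e2) => /=.
  by rewrite !e_src_whisk !e_tgt_whisk !cats0.
- by move=> x y s p q _ [t [H1 H2]]; exists (x ++ t ++ y); split; apply: is_path_whisk.
- move=> u r s p q t w v Hr Hp Hq Hw _; exists v.
  by split; apply: is_path_cat Hr _; apply: is_path_cat Hw.
Qed.

Lemma homot_catl u r s p q : is_path u r s -> homot s p q -> homot u (r ++ p) (r ++ q).
Proof.
move=> Hr H; have [t [Hp Hq]] := homot_parallel H.
by have := @homot_comp m R P u r s p q t [::] t Hr Hp Hq (erefl t) H; rewrite !cats0.
Qed.

Lemma homot_catr s p q t w v : homot s p q -> is_path s p t -> is_path t w v ->
  homot s (p ++ w) (q ++ w).
Proof.
move=> H Hp Hw; have [t' [Hp' Hq]] := homot_parallel H.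
rewrite -(is_path_tgt_uniq Hp Hp') in Hq.
exact: (@homot_comp m R P s [::] s p q t w v (erefl s) Hp Hq Hw H).
Qed.

Lemma homot_cons (e : edge) s p q : edge_ok e -> e_src e = s -> homot (e_tgt e) p q ->
  homot s (e :: p) (e :: q).
Proof. by move=> He Hs; apply: (@homot_catl s [:: e]). Qed.

Lemma homot_cat_inv s r t : is_path s r t -> homot s (r ++ path_inv r) [::].
Proof.
elim: r s => [|e r IH] s /=; first by move=> ->; apply: (@homot_refl m R P t [::] t).
move=> [He [Hs Hr]].
have Hinv : is_path (e_tgt e) [:: e_inv e] s by rewrite /= e_src_inv e_tgt_inv.
have He' : is_path s [:: e] (e_tgt e) by [].
have := @homot_comp m R P s [:: e] (e_tgt e) (r ++ path_inv r) [::] (e_tgt e) [:: e_inv e] s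
  He' (is_path_cat Hr (is_path_inv Hr)) (erefl _) Hinv (IH _ Hr).
rewrite /path_inv /= rev_cons -cats1 -!catA /= => H.
by apply: homot_trans H _; rewrite -Hs; apply: homot_inv.
Qed.

End Homotopy.
End DerivationGraph.

(** * Squier's theorem for terminating rewriting systems with a normal-form map *)

Section CompleteRewritingSystem.
Variable m : nat.
Local Notation word := (seq 'I_m).
Local Notation edge := (edge m).
Local Notation Edge := (@Edge m).
Local Notation redex := (nat * (word * word))%type.
Variable R : seq (word * word).
Local Notation is_path := (@is_path m R).
Local Notation edge_ok := (@edge_ok m R).

Definition forward_step (s : word) (e : edge) : Prop :=
  [/\ edge_ok e, e_dir e & e_src e = s].

Definition occurs_at (s : word) (p : redex) : bool :=
  take (size p.2.1) (drop p.1 s) == p.2.1.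

Definition redexes (s : word) : seq redex :=
  [seq p <- [seq (i, r) | i <- iota 0 (size s).+1, r <- R] | occurs_at s p].

Definition redex_edge (s : word) (p : redex) : edge :=
  Edge (take p.1 s) p.2 true (drop (p.1 + size p.2.1) s).

Lemma redexesP s (p : redex) :
  reflect [/\ p.1 <= size s, p.2 \in R & occurs_at s p] (p \in redexes s).
Proof.
rewrite mem_filter; apply: (iffP andP) => [[Ho /allpairsP [[i r] [Hi Hr Ep]]]|[H1 H2 H3]].
  by subst p; split=> //; move: Hi; rewrite mem_iota add0n ltnS.
split=> //; apply/allpairsP; exists (p.1, p.2); case: p H1 H2 H3 => i r H1 H2 H3.
by split=> //; rewrite mem_iota add0n ltnS.
Qed.

Lemma occurs_atE s (p : redex) : occurs_at s p ->
  take p.1 s ++ p.2.1 ++ drop (p.1 + size p.2.1) s = s.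
Proof. by move=> /eqP H; rewrite -{1}H addnC -drop_drop !cat_take_drop. Qed.

Lemma redex_edge_step s (p : redex) : p \in redexes s -> forward_step s (redex_edge s p).
Proof. by case/redexesP => _ /InP Hr /occurs_atE Es; split. Qed.

Lemma forward_edge_eq (e e' : edge) : e_dir e -> e_dir e' -> e_rule e = e_rule e' ->
  e_src e = e_src e' -> size (e_left e) = size (e_left e') -> e = e'.
Proof.
case: e => x r [] y //; case: e' => x' r' [] y' // _ _ /= <- /eqP.
by rewrite /e_src /= => + Hx; rewrite eqseq_cat // eqseq_cat // eqxx => /andP [/eqP -> /eqP ->].
Qed.

Lemma step_redex s (e : edge) : forward_step s e ->
  (size (e_left e), e_rule e) \in redexes s /\ e = redex_edge s (size (e_left e), e_rule e).
Proof.
case: e => x r [] y [] //= /InP Hr _ Es.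
have Ho : occurs_at s (size x, r) by rewrite /occurs_at -Es /= drop_size_cat // take_size_cat.
have Hx : size x <= size s by rewrite -Es size_cat leq_addr.
split; first by apply/redexesP.
apply: forward_edge_eq => //=; first by rewrite Es /e_src /= (occurs_atE Ho).
by rewrite size_takel.
Qed.

Lemma redex_end s (p : redex) : p \in redexes s -> p.1 + size p.2.1 <= size s.
Proof.
case/redexesP => Hp _ /occurs_atE Es.
by rewrite -[X in _ <= size X]Es !size_cat size_takel // addnA leq_addr.
Qed.

Lemma redex_in_factor s X v Y (p : redex) : s = X ++ v ++ Y ->
  p \in redexes s -> size X <= p.1 -> p.1 + size p.2.1 <= size X + size v ->
  (p.1 - size X, p.2) \in redexes v /\
  redex_edge s p = e_whisk X Y (redex_edge v (p.1 - size X, p.2)).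
Proof.
case: p => i r /= -> Hp HXi Hiv.
have Hdrop : drop i (X ++ v ++ Y) = drop (i - size X) v ++ Y.
  rewrite drop_cat ltnNge HXi /= drop_cat; case: ltnP => // Hv.
  have -> : i - size X - size v = 0 by lia.
  by rewrite drop0 drop_oversize.
have Hv : (i - size X, r) \in redexes v.
  case/redexesP: Hp => /= _ Hr /eqP Ho; apply/redexesP; split => //=; first by lia.
  by apply/eqP; rewrite -[RHS]Ho Hdrop takel_cat // size_drop /=; lia.
split=> //; apply: forward_edge_eq => //=.
- rewrite e_src_whisk; case: (redex_edge_step Hp) => _ _ ->.
  by case: (redex_edge_step Hv) => _ _ ->.
- by rewrite size_cat !size_takel ?size_cat; lia.
Qed.

Variables (k : nat) (M : word -> nat) (nf : word -> word).
Hypothesis lhs_size : forall r, List.In r R -> size r.1 <= k.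
Hypothesis M_rule : forall x r y, List.In r R -> M (x ++ r.2 ++ y) < M (x ++ r.1 ++ y).
Hypothesis nf_rule : forall x r y, List.In r R -> nf (x ++ r.1 ++ y) = nf (x ++ r.2 ++ y).
Hypothesis nf_irreducible :
  forall s, (forall x r y, List.In r R -> s <> x ++ r.1 ++ y) -> nf s = s.

Lemma M_step s (e : edge) : forward_step s e -> M (e_tgt e) < M s.
Proof. by case: e => x r [] y [] //= Hr _ <-; apply: M_rule. Qed.

Lemma nf_edge (e : edge) : edge_ok e -> nf (e_tgt e) = nf (e_src e).
Proof. by case: e => x r [] y Hr; rewrite /e_src /e_tgt /= nf_rule. Qed.

Lemma nf_path s p t : is_path s p t -> nf s = nf t.
Proof.
elim: p s => [|e p IH] s /=; first by move=> ->.
by move=> [He [<- Hp]]; rewrite -nf_edge // (IH _ Hp).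
Qed.

Lemma nf_redexes_nil s : redexes s = [::] -> nf s = s.
Proof.
move=> Hs; apply: nf_irreducible => x r y Hr Es.
by have [] := @step_redex s (Edge x r true y) (And3 Hr erefl (esym Es)); rewrite Hs.
Qed.

Fixpoint reduce (fuel : nat) (s : word) : seq edge :=
  if fuel is fuel'.+1 then
    if redexes s is p :: _ then redex_edge s p :: reduce fuel' (e_tgt (redex_edge s p))
    else [::]
  else [::].

(* Leftmost-redex reduction; [M] drops at each step, so [(M s).+1] is enough fuel. *)
Definition reduction (s : word) : seq edge := reduce (M s).+1 s.

Lemma reduce_enough_fuel f1 f2 s : M s < f1 -> M s < f2 -> reduce f1 s = reduce f2 s.
Proof.
elim: f1 f2 s => [|f1 IH] [|f2] s //= H1 H2.
case E: (redexes s) => [|p c] //; congr (_ :: _).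
have /M_step Hp : forward_step s (redex_edge s p) by apply: redex_edge_step; rewrite E mem_head.
by apply: IH; apply: leq_trans Hp _.
Qed.

Lemma reduction_unfold s : reduction s =
  if redexes s is p :: _ then redex_edge s p :: reduction (e_tgt (redex_edge s p)) else [::].
Proof.
rewrite /reduction /=; case E: (redexes s) => [|p c] //; congr (_ :: _).
have /M_step Hp : forward_step s (redex_edge s p) by apply: redex_edge_step; rewrite E mem_head.
exact: reduce_enough_fuel Hp (ltnSn _).
Qed.

Lemma reduction_forward s : all (@e_dir m) (reduction s).
Proof.
rewrite /reduction; move: (M s).+1 => f; elim: f s => // f IH s /=.
by case: (redexes s) => // p _; apply: IH.
Qed.

Lemma is_path_reduction s : is_path s (reduction s) (nf s).
Proof.
have [K] := ubnP (M s); elim: K s => // K IH s HsK.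
rewrite reduction_unfold; case E: (redexes s) => [|p c] /=; first by rewrite nf_redexes_nil.
have /redex_edge_step Hstep : p \in redexes s by rewrite E mem_head.
have [He _ Hs] := Hstep; split=> //; split=> //.
rewrite -[X in nf X]Hs -nf_edge //; exact: IH (leq_trans (M_step Hstep) HsK).
Qed.

Fixpoint words_of_size (l : nat) : seq word :=
  if l is l'.+1 then [seq a :: w | a <- enum 'I_m, w <- words_of_size l'] else [:: [::]].

Lemma words_of_sizeP w : w \in words_of_size (size w).
Proof.
elim: w => [|a w IH] /=; first by rewrite inE.
by apply/allpairsP; exists (a, w); rewrite mem_enum IH.
Qed.

Lemma size_words_of_size l w : w \in words_of_size l -> size w = l.
Proof.
elim: l w => [|l IH] w /=; first by rewrite inE => /eqP ->.
by case/allpairsP => [[a u] [_ /IH Hu ->]] /=; rewrite Hu.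
Qed.

Definition short_words : seq word :=
  flatten [seq words_of_size l | l <- iota 0 (2 * k).+1].

Lemma short_wordsP w : size w <= 2 * k -> w \in short_words.
Proof.
by move=> Hw; apply/flatten_mapP; exists (size w); rewrite ?words_of_sizeP // mem_iota ltnS.
Qed.

(* Overlapping redexes lie in a factor of length at most [2 k]; for each such word [v]
   and each step out of [v], the basis compares that step followed by the reduction of its
   target with the reduction of [v]. *)
Definition branching_basis : seq (word * seq edge * seq edge) :=
  List.flat_map (fun v => [seq (v, redex_edge v p :: reduction (e_tgt (redex_edge v p)),
                                 reduction v) | p <- redexes v]) short_words.

Lemma branching_basis_mem v (p : redex) : size v <= 2 * k -> p \in redexes v ->
  List.In (v, redex_edge v p :: reduction (e_tgt (redex_edge v p)), reduction v)
          branching_basis.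
Proof.
move=> Hv Hp; apply/List.in_flat_map; exists v; split; first exact/InP/short_wordsP.
by apply: List.in_map; apply/InP.
Qed.

Lemma branching_basis_parallel s p q : List.In (s, p, q) branching_basis ->
  exists t, is_path s p t /\ is_path s q t.
Proof.
move=> /List.in_flat_map [v [_ /List.in_map_iff [p0 [[<- <- <-] /InP Hp0]]]].
have [He _ Hs] := redex_edge_step Hp0.
exists (nf v); split; last exact: is_path_reduction.
by do 2 split=> //; rewrite -[X in nf X]Hs -nf_edge //; apply: is_path_reduction.
Qed.

Local Notation homot := (@homot m R branching_basis).
Local Notation basis_parallel := (@branching_basis_parallel).

Lemma disjoint_redexes s (p q : redex) : p \in redexes s -> q \in redexes s ->
  p.1 + size p.2.1 <= q.1 ->
  exists a b, [/\ forward_step (e_tgt (redex_edge s q)) a,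
                  forward_step (e_tgt (redex_edge s p)) b &
                  homot s [:: redex_edge s p; b] [:: redex_edge s q; a]].
Proof.
move=> Hp Hq Hpq; set A := take q.1 s; set B := drop q.1 s.
have HA : size A = q.1 by rewrite size_takel // (leq_trans (leq_addr _ _) (redex_end Hq)).
have EsA : s = [::] ++ A ++ B by rewrite cat_take_drop.
have EsB : s = A ++ B ++ [::] by rewrite cats0 cat_take_drop.
have HpA' : p.1 + size p.2.1 <= size ([::] : word) + size A by rewrite HA.
have HqB' : q.1 + size q.2.1 <= size A + size B by rewrite -size_cat cat_take_drop redex_end.
have [HpA Ep] := redex_in_factor EsA Hp (leq0n _) HpA'.
have [HqB Eq] := redex_in_factor EsB Hq (eq_leq HA) HqB'.
set E1 := redex_edge A _ in Ep; set E2 := redex_edge B _ in Eq.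
have [O1 _ S1] := redex_edge_step HpA; have [O2 _ S2] := redex_edge_step HqB.
exists (e_whisk [::] (e_tgt E2) E1), (e_whisk (e_tgt E1) [::] E2).
split; first by split=> //; rewrite Eq e_src_whisk e_tgt_whisk S1 cats0.
  by split=> //; rewrite Ep e_src_whisk e_tgt_whisk S2 cats0.
have := homot_peiffer branching_basis O1 O2; rewrite S1 S2 cat_take_drop.
by rewrite Ep Eq; apply.
Qed.

Lemma overlapping_redexes s (p q : redex) : p \in redexes s -> q \in redexes s ->
  q.1 < p.1 + size p.2.1 -> p.1 < q.1 + size q.2.1 ->
  exists X v Y pv qv,
    [/\ s = X ++ v ++ Y, size v <= 2 * k, pv \in redexes v & qv \in redexes v] /\
    redex_edge s p = e_whisk X Y (redex_edge v pv) /\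
    redex_edge s q = e_whisk X Y (redex_edge v qv).
Proof.
move=> Hp Hq Hqp Hpq.
have /InP /lhs_size Hlp : p.2 \in R by case/redexesP: Hp.
have /InP /lhs_size Hlq : q.2 \in R by case/redexesP: Hq.
have Hpe := redex_end Hp; have Hqe := redex_end Hq.
have [a Ea] : exists a, a = minn p.1 q.1 by eexists.
have [b Eb] : exists b, b = maxn (p.1 + size p.2.1) (q.1 + size q.2.1) by eexists.
set X := take a s; set v := take (b - a) (drop a s); set Y := drop b s.
have HX : size X = a by rewrite size_takel //; lia.
have Hv : size v = b - a by rewrite size_takel // size_drop; lia.
have Es : s = X ++ v ++ Y.
  by rewrite /Y -(subnK (_ : a <= b)) -?drop_drop ?cat_take_drop //; lia.
have [Hpv Ep] := redex_in_factor Es Hp (ltac:(lia)) (ltac:(lia)).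
have [Hqv Eq] := redex_in_factor Es Hq (ltac:(lia)) (ltac:(lia)).
by exists X, v, Y, (p.1 - size X, p.2), (q.1 - size X, q.2); split=> //; split=> //; lia.
Qed.

Definition coherent (s : word) : Prop :=
  forall e, forward_step s e -> homot s (e :: reduction (e_tgt e)) (reduction s).

Lemma coherent_forward_path K : (forall t, M t < K -> coherent t) ->
  forall t p t', is_path t p t' -> all (@e_dir m) p -> M t < K ->
  homot t (p ++ reduction t') (reduction t).
Proof.
move=> IH t p; elim: p t => [|e p IHp] t t' /=.
  by move=> <- _ _; exact: (homot_refl branching_basis (is_path_reduction t)).
move=> [He [Hs Hp]] /andP [Hd Hall] Ht.
have Hstep : forward_step t e by [].
apply: homot_trans _ (IH t Ht e Hstep); apply: (homot_cons basis_parallel He Hs).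
by apply: IHp Hp Hall _; apply: ltn_trans Ht; apply: M_step Hstep.
Qed.

Lemma coherent_square s (a b a' b' : edge) : (forall t, M t < M s -> coherent t) ->
  forward_step s a -> forward_step s b ->
  forward_step (e_tgt b) a' -> forward_step (e_tgt a) b' ->
  homot s [:: a; b'] [:: b; a'] ->
  homot s (a :: reduction (e_tgt a)) (b :: reduction (e_tgt b)).
Proof.
move=> IH Ha Hb Ha' Hb' H.
have [[Oa _ Sa] [Ob _ Sb]] := (Ha, Hb); have [Ob' _ Sb'] := Hb'.
have [w [/= [_ [_ [_ [_ Ew1]]]] [_ [_ [_ [_ Ew2]]]]]] := homot_parallel basis_parallel H.
apply: homot_trans (_ : homot s (a :: b' :: reduction w) _).
  apply: (homot_cons basis_parallel Oa Sa); apply: homot_sym; rewrite -Ew1.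
  exact: IH (M_step Ha) _ Hb'.
apply: homot_trans (_ : homot s (b :: a' :: reduction w) _).
  apply: (homot_catr basis_parallel H _ (is_path_reduction w)).
  by rewrite /= Sa Sb' Ew1.
apply: (homot_cons basis_parallel Ob Sb); rewrite -Ew2.
exact: IH (M_step Hb) _ Ha'.
Qed.

Lemma coherent_factor s X v Y (pv : redex) : (forall t, M t < M s -> coherent t) ->
  s = X ++ v ++ Y -> size v <= 2 * k -> pv \in redexes v ->
  homot s (e_whisk X Y (redex_edge v pv) :: reduction (e_tgt (e_whisk X Y (redex_edge v pv))))
          (map (e_whisk X Y) (reduction v) ++ reduction (X ++ nf v ++ Y)).
Proof.
move=> IH Es Hv Hpv; set e := e_whisk X Y (redex_edge v pv).
have [Ov _ Sv] := redex_edge_step Hpv.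
have He : forward_step s e by split=> //; rewrite e_src_whisk Sv Es.
have [Oe _ Se] := He.
set red := map (e_whisk X Y) (reduction (e_tgt (redex_edge v pv))).
have Hred : is_path (e_tgt e) red (X ++ nf v ++ Y).
  have -> : nf v = nf (e_tgt (redex_edge v pv)) by rewrite nf_edge // Sv.
  by rewrite e_tgt_whisk; apply: is_path_whisk; apply: is_path_reduction.
apply: homot_trans (_ : homot s (e :: red ++ reduction (X ++ nf v ++ Y)) _).
  apply: (homot_cons basis_parallel Oe Se); apply: homot_sym.
  apply: coherent_forward_path IH _ _ _ Hred _ (M_step He).
  by rewrite all_map; apply: reduction_forward.
have Hb := homot_whisk X Y (homot_basis R (branching_basis_mem Hv Hpv)).
rewrite -Es in Hb; apply: (homot_catr basis_parallel Hb _ (is_path_reduction _)).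
by split; [|split].
Qed.

Lemma reduction_coherent s : coherent s.
Proof.
have [K] := ubnP (M s); elim: K s => // K IHK s HsK.
have IH t : M t < M s -> coherent t by move=> Ht; apply: IHK; apply: leq_trans Ht HsK.
move=> e He; have [Hpe ->] := step_redex He.
set pe := (size (e_left e), e_rule e) in Hpe *.
rewrite [reduction s]reduction_unfold; case E: (redexes s) => [|p0 c]; first by rewrite E in Hpe.
have Hp0 : p0 \in redexes s by rewrite E mem_head.
have [He' He0] := (redex_edge_step Hpe, redex_edge_step Hp0).
have [Hl|Hnl] := leqP (pe.1 + size pe.2.1) p0.1.
  have [a' [b' [Ha' Hb' H]]] := disjoint_redexes Hpe Hp0 Hl.
  exact: coherent_square IH He' He0 Ha' Hb' H.
have [Hl'|Hnl'] := leqP (p0.1 + size p0.2.1) pe.1.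
  have [a' [b' [Ha' Hb' H]]] := disjoint_redexes Hp0 Hpe Hl'.
  by apply: homot_sym; apply: coherent_square IH He0 He' Ha' Hb' H.
have [X [v [Y [pv [qv [[Es Hv Hpv Hqv] [-> ->]]]]]]] := overlapping_redexes Hpe Hp0 Hnl Hnl'.
apply: homot_trans (coherent_factor IH Es Hv Hpv) _.
by apply: homot_sym; apply: coherent_factor IH Es Hv Hqv.
Qed.

Lemma homot_edge_reduction s (e : edge) : edge_ok e -> e_src e = s ->
  homot s (e :: reduction (e_tgt e)) (reduction s).
Proof.
move=> He Hs; case Hd: (e_dir e); first exact: reduction_coherent.
(* a backward step is the inverse of a forward step out of its target *)
have Hf : forward_step (e_tgt e) (e_inv e) by rewrite /forward_step e_src_inv /= Hd.
have := reduction_coherent Hf; rewrite e_tgt_inv Hs => Hinv.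
apply: homot_trans (_ : homot s (e :: e_inv e :: reduction s) _).
  by apply: (homot_cons basis_parallel He Hs); apply: homot_sym.
have Hee : is_path s [:: e; e_inv e] s by rewrite /= e_src_inv e_tgt_inv Hs.
have := homot_inv branching_basis He; rewrite Hs => H.
exact: (homot_catr basis_parallel H Hee (is_path_reduction s)).
Qed.

Lemma homot_reduction s p t : is_path s p t ->
  homot s p (reduction s ++ path_inv (reduction t)).
Proof.
elim: p s => [|e p IH] s /=.
  by move=> <-; apply: homot_sym; exact: (homot_cat_inv branching_basis (is_path_reduction s)).
move=> [He [Hs Hp]].
have Hinv : is_path (nf (e_tgt e)) (path_inv (reduction t)) t.
  by rewrite (nf_path Hp); apply: is_path_inv; apply: is_path_reduction.
apply: homot_trans (homot_cons basis_parallel He Hs (IH _ Hp)) _.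
have Hred : is_path s (e :: reduction (e_tgt e)) (nf (e_tgt e)).
  by split; [|split; last exact: is_path_reduction].
exact: (homot_catr basis_parallel (homot_edge_reduction He Hs) Hred Hinv).
Qed.

Lemma branching_basis_homotopy_basis : homotopy_basis R branching_basis.
Proof.
split=> [s p q /branching_basis_parallel //|s t p q Hp Hq].
by apply: homot_trans (homot_reduction Hp) _; apply: homot_sym; apply: homot_reduction.
Qed.

End CompleteRewritingSystem.

(** * A finite complete presentation of lps_n *)

Section LPSPresentation.
Variable n : nat.
Local Notation tableau := (seq (seq 'I_n)).
Local Notation rins := (@lps_rins n).

Definition boxes (T : tableau) : nat := sumn (map size T).

(* Boxes of the [i]-th column (from 0) count [i + 1] times. *)
Fixpoint moment (T : tableau) : nat := if T is _ :: T' then boxes T + moment T' else 0.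

Lemma boxes_cons c (T : tableau) : boxes (c :: T) = size c + boxes T.
Proof. by []. Qed.

Lemma boxes_cat (A B : tableau) : boxes (A ++ B) = boxes A + boxes B.
Proof. by rewrite /boxes map_cat sumn_cat. Qed.

Lemma moment_cat (A B : tableau) : moment (A ++ B) = moment A + size A * boxes B + moment B.
Proof. by elim: A => [|c A IH] //=; rewrite IH !boxes_cons boxes_cat; lia. Qed.

Lemma boxes_rins (T : tableau) x : boxes (rins T x) = (boxes T).+1.
Proof.
elim: T => [|c T IH] //=; case: c => [|z c] /=; first by rewrite !boxes_cons IH.
by case: ifP => _ /=; rewrite !boxes_cons ?IH /=; lia.
Qed.

Lemma boxes_foldl_rins (T : tableau) w : boxes (foldl rins T w) = boxes T + size w.
Proof. by elim: w T => [|x w IH] T /=; rewrite ?addn0 // IH boxes_rins addSnnS. Qed.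

Lemma boxes_Rl w : boxes (lps_Rl w) = size w.
Proof. exact: boxes_foldl_rins. Qed.

Lemma size_reading (T : tableau) : size (reading T) = boxes T.
Proof. by elim: T => [|c T IH] //=; rewrite reading_cons size_cat size_rev IH. Qed.

Lemma size_rins (T : tableau) x : size (rins T x) <= (size T).+1.
Proof.
elim: T => [|c T IH] //=; case: c => [|z c] /=; first by rewrite ltnS.
by case: ifP => _ //=; rewrite ltnS.
Qed.

Lemma size_rins_caught (T : tableau) x :
  has (fun c => ~~ passes x c) T -> size (rins T x) = size T.
Proof.
elim: T => [|c T IH] //=; case: c => [|z c] /=; first by move/IH ->.
by rewrite -ltnNge; case: ifP => //= _ /IH ->.
Qed.

Lemma size_foldl_rins_column (T : tableau) c : sorted (@ord_lt n) c ->
  size (foldl rins T (rev c)) <= (size T).+1.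
Proof.
elim: c => [|z c IH] //=; rewrite rev_cons -cats1 foldl_cat /=.
case: c IH => [|w c] IH /=; first by move=> _; apply: size_rins.
case/andP=> Hzw Hs; move: (IH Hs); rewrite rev_cons -cats1 foldl_cat /=.
have [A [B [-> _ Hcatch]]] := rins_split (foldl rins T (rev c)) w.
by rewrite size_rins_caught // has_cat Hcatch.
Qed.

Lemma foldl_rins_head (h : 'I_n) ys c (T : tableau) :
  ~~ passes h c -> all (fun y : 'I_n => (h < y)%N) ys ->
  exists c' T', [/\ foldl rins (c :: T) ys = c' :: T', ~~ passes h c' & size c <= size c'].
Proof.
elim: ys c T => [|y ys IH] c T Hc /=; first by exists c, T.
case/andP=> Hy Hys; case: c Hc => [|z c] //= Hc.
case: ifP => _; last exact: IH.
have Hyzc : ~~ passes h (y :: z :: c) by rewrite /= -ltnNge.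
have [c' [T' [E Hc' Hsz]]] := IH _ T Hyzc Hys.
by exists c', T'; split=> //; apply: ltnW.
Qed.

Lemma Rl_column c : sorted (@ord_lt n) c -> lps_Rl (rev c) = if c is [::] then [::] else [:: c].
Proof. by case: c => [|z c] // Hs; rewrite /lps_Rl foldl_rins_column. Qed.

(* Inserting the column [h :: d] after the column [c] puts [h] at the bottom of the
   first column. *)
Lemma Rl_two_columns c (h : 'I_n) d : sorted (@ord_lt n) c -> sorted (@ord_lt n) (h :: d) ->
  ~~ passes h c -> exists c' T,
  [/\ lps_Rl (rev c ++ rev (h :: d)) = c' :: T, size c < size c', size T <= 1 &
      size c' + boxes T = size c + (size d).+1].
Proof.
move=> Hc Hhd Hh; rewrite /lps_Rl foldl_cat -/(lps_Rl _) Rl_column //.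
case: c Hc Hh => [|z c] // Hc Hh.
have Hsize := size_foldl_rins_column [:: z :: c] Hhd.
have Hboxes := boxes_foldl_rins [:: z :: c] (rev (h :: d)).
rewrite rev_cons -cats1 foldl_cat in Hsize Hboxes *.
have Hd : all (fun y : 'I_n => (h < y)%N) (rev d).
  by rewrite all_rev (order_path_min (@ord_lt_trans n)).
have [[|z' c'] [T [E //= Hz' Hsz]]] := foldl_rins_head [::] Hh Hd.
have Hhz : (h < z')%N by rewrite ltnNge.
rewrite E /= Hhz in Hsize Hboxes *; exists (h :: z' :: c'), T.
rewrite /boxes /= !size_cat size_rev /= in Hsize Hboxes *.
by split=> //; lia.
Qed.

Lemma is_lps_tableau_cons2 c d (T : tableau) :
  is_lps_tableau [:: c; d] -> is_lps_tableau (d :: T) -> is_lps_tableau [:: c, d & T].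
Proof.
case: c => [|zc c] //; case: d => [|zd d] //= /andP [/andP [Hc /andP [/andP [Hzd Hd] _]] _].
move=> /andP [/andP [Hsd HT] VT]; rewrite Hc Hsd HT VT /= Hzd Hd andbT /=.
by apply: sub_all HT => e; apply: sub_all => y; apply: leq_trans Hzd.
Qed.

Lemma moment_small (T : tableau) : size T <= 1 -> moment T = boxes T.
Proof. by case: T => [|c [|]] //= _; rewrite addn0. Qed.

Lemma Rl_reading_moment (T : tableau) : all (sorted (@ord_lt n)) T -> size T <= 2 ->
  ~~ is_lps_tableau T ->
  size (lps_Rl (reading T)) <= size T /\
  moment (lps_Rl (reading T)) + size (lps_Rl (reading T)) < moment T + size T.
Proof.
case: T => [|c [|d [|]]] //=.
  by case: c => [|z c] //= /andP [->].
rewrite andbT reading_cons /reading /= cats0 => /andP [Hc Hd] _.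
case: c Hc => [|z c] Hc /=.
  by rewrite Rl_column //; case: d Hd => [|h d] //= _; rewrite /boxes /=; lia.
case: d Hd => [|h d] Hd /=; first by rewrite cats0 Rl_column //= /boxes /=; lia.
rewrite (Hc : path _ z c) (Hd : path _ h d) /= => Hzd.
have Hh : ~~ passes h (z :: c).
  apply: contra Hzd => /= Hzh; rewrite Hzh ?andbT /=; apply/allP => y Hy.
  exact: leq_trans Hzh (ltnW (allP (order_path_min (@ord_lt_trans n) Hd) y Hy)).
have [c' [T [-> Hsz HT Hb]]] := Rl_two_columns Hc Hd Hh.
rewrite /= moment_small // /boxes /= in Hb Hsz *; split=> //; lia.
Qed.

Definition ncols : nat := #|{set 'I_n}|.
Local Notation word := (seq 'I_ncols).

(* The generators of lps_n are the columns, i.e. the subsets of ['I_n], the empty one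
   included; a column is listed from its bottom (smallest) entry upwards. *)
Definition column (i : 'I_ncols) : seq 'I_n := [seq x <- enum 'I_n | x \in enum_val i].
Definition column_gen (c : seq 'I_n) : 'I_ncols := enum_rank [set x in c].
Definition gen_word (i : 'I_ncols) : seq 'I_n := rev (column i).
Definition expand (u : word) : seq 'I_n := flatten (map gen_word u).
Definition tableau_of (u : word) : tableau := map column u.
Definition is_normal (u : word) : bool := is_lps_tableau (tableau_of u).
Definition nf (u : word) : word := map column_gen (lps_Rl (expand u)).
Definition lps_measure (u : word) : nat := moment (tableau_of u) + size u.
Definition lps_rules : seq (word * word) :=
  [seq (u, nf u) | u <- words_of_size ncols 1 ++ words_of_size ncols 2 & ~~ is_normal u].

Lemma sorted_enum_ord : sorted (@ord_lt n) (enum 'I_n).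
Proof. by have := iota_ltn_sorted 0 n; rewrite -val_enum_ord sorted_map. Qed.

Lemma sorted_column i : sorted (@ord_lt n) (column i).
Proof. exact: (sorted_filter (@ord_lt_trans n) _ sorted_enum_ord). Qed.

Lemma column_genK c : sorted (@ord_lt n) c -> column (column_gen c) = c.
Proof.
move=> Hc; apply: (irr_sorted_eq (@ord_lt_trans n)) => //; first exact: ltnn.
  exact: sorted_column.
by move=> x; rewrite /column /column_gen enum_rankK mem_filter in_set mem_enum andbT.
Qed.

Lemma columnK i : column_gen (column i) = i.
Proof.
rewrite /column_gen; have -> : [set x in column i] = enum_val i.
  by apply/setP => x; rewrite in_set /column mem_filter mem_enum andbT.
exact: enum_valK.
Qed.

Lemma expand_reading u : expand u = reading (tableau_of u).
Proof. by rewrite /expand /reading /tableau_of -map_comp. Qed.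

Lemma expand_cat u v : expand (u ++ v) = expand u ++ expand v.
Proof. by rewrite /expand map_cat flatten_cat. Qed.

Lemma tableau_of_column_gen (T : tableau) : is_lps_tableau T ->
  tableau_of (map column_gen T) = T.
Proof.
elim: T => [|c T IH] //=; case: c => [|z c] //= /andP [/andP [Hc _] HT].
by rewrite column_genK // IH.
Qed.

Lemma tableau_of_nf u : tableau_of (nf u) = lps_Rl (expand u).
Proof. by rewrite tableau_of_column_gen // is_lps_tableau_Rl. Qed.

Lemma nf_normal u : is_normal u -> nf u = u.
Proof.
move=> Hu; rewrite /nf expand_reading Rl_reading //.
by rewrite /tableau_of -map_comp (eq_map columnK) map_id.
Qed.

Lemma Rl_expand_nf x l y : lps_Rl (expand (x ++ nf l ++ y)) = lps_Rl (expand (x ++ l ++ y)).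
Proof.
rewrite !expand_cat /lps_Rl !foldl_cat; congr foldl.
by rewrite (foldl_rins_Rl _ (expand l)) [expand (nf l)]expand_reading tableau_of_nf.
Qed.

Lemma boxes_nf u : boxes (tableau_of (nf u)) = boxes (tableau_of u).
Proof. by rewrite tableau_of_nf boxes_Rl expand_reading size_reading. Qed.

Lemma nf_measure l : ~~ is_normal l -> size l <= 2 ->
  size (nf l) <= size l /\
  moment (tableau_of (nf l)) + size (nf l) < moment (tableau_of l) + size l.
Proof.
move=> Hn Hl; rewrite tableau_of_nf /nf size_map expand_reading.
rewrite -(size_map column l) -/(tableau_of l) in Hl *.
apply: Rl_reading_moment Hl Hn.
by apply/allP => c /mapP [i _ ->]; apply: sorted_column.
Qed.

Lemma lps_rulesP r : List.In r lps_rules ->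
  [/\ r.2 = nf r.1, ~~ is_normal r.1 & size r.1 <= 2].
Proof.
move/InP/mapP => [u]; rewrite mem_filter => /andP [Hn Hu] -> /=; split => //.
by move: Hu; rewrite mem_cat => /orP [] /size_words_of_size ->.
Qed.

Lemma lps_rules_mem l : ~~ is_normal l -> 0 < size l <= 2 -> List.In (l, nf l) lps_rules.
Proof.
move=> Hn Hl; apply/InP/mapP; exists l => //; rewrite mem_filter Hn mem_cat.
by case: l Hn Hl => [|i [|j [|]]] //= _ _; rewrite ?words_of_sizeP ?orbT.
Qed.

Lemma lps_rules_lhs_size r : List.In r lps_rules -> size r.1 <= 2.
Proof. by case/lps_rulesP. Qed.

Lemma lps_measure_rule x r y : List.In r lps_rules ->
  lps_measure (x ++ r.2 ++ y) < lps_measure (x ++ r.1 ++ y).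
Proof.
case/lps_rulesP => -> Hn Hl; have [Hsize Hmom] := nf_measure Hn Hl.
rewrite /lps_measure /tableau_of !map_cat !moment_cat !boxes_cat -!/(tableau_of _) boxes_nf.
rewrite !size_cat !size_map -!/(tableau_of _) in Hsize Hmom *.
have := leq_mul Hsize (leqnn (boxes (tableau_of y))); lia.
Qed.

Lemma nf_lps_rule x r y : List.In r lps_rules -> nf (x ++ r.1 ++ y) = nf (x ++ r.2 ++ y).
Proof. by case/lps_rulesP => -> _ _; rewrite /nf Rl_expand_nf. Qed.

Lemma not_normal_factor s : ~~ is_normal s ->
  exists x l y, s = x ++ l ++ y /\ List.In (l, nf l) lps_rules.
Proof.
elim: s => [|i s IH] //.
case Ei: (column i) (sorted_column i) => [|z c] Hc.
  move=> _; exists [::], [:: i], s; split=> //.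
  by apply: lps_rules_mem => //; rewrite /is_normal /= Ei.
case: s IH => [|j s] IH; first by rewrite /is_normal /= Ei Hc.
case Hij : (is_normal [:: i; j]) => Hn.
  have [|x [l [y [-> Hl]]]] := IH; last by exists (i :: x), l, y.
  by apply: contra Hn; apply: is_lps_tableau_cons2 Hij.
by exists [::], [:: i; j], s; split=> //; apply: lps_rules_mem; rewrite ?Hij.
Qed.

Lemma nf_lps_irreducible s :
  (forall x r y, List.In r lps_rules -> s <> x ++ r.1 ++ y) -> nf s = s.
Proof.
move=> Hirr; apply: nf_normal; apply/negPn/negP => /not_normal_factor [x [l [y [Es Hl]]]].
exact: Hirr Hl Es.
Qed.

Lemma is_path_lps_cong s p t : is_path lps_rules s p t -> lps_cong (expand s) (expand t).
Proof.
rewrite /lps_cong; elim: p s => [|e p IH] s /=; first by move=> ->.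
move=> [He [<- Hp]]; rewrite -(IH _ Hp).
case: e He {Hp} => x [l r] d y /lps_rulesP [/= -> _ _].
by rewrite /e_src /e_tgt /=; case: d; rewrite Rl_expand_nf.
Qed.

Lemma lps_presentation : presents (@lps_cong n) gen_word lps_rules.
Proof.
split=> [w|u v].
  exists (map column_gen (lps_Rl w)); rewrite /lps_cong -/(expand _) expand_reading.
  by rewrite tableau_of_column_gen ?Rl_reading ?is_lps_tableau_Rl.
split=> [Huv|[p]]; last exact: is_path_lps_cong.
have Hnf : nf u = nf v by rewrite /nf Huv.
have Hpath w := is_path_reduction lps_measure_rule nf_lps_rule nf_lps_irreducible w.
exists (reduction lps_rules lps_measure u ++ path_inv (reduction lps_rules lps_measure v)).
by apply: is_path_cat (Hpath u) _; rewrite Hnf; apply: is_path_inv.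
Qed.

End LPSPresentation.

Theorem corollary5p7 (n : nat) :
  finite_derivation_type (@lps_cong n).
Proof.
exists (ncols n), (@gen_word n), (lps_rules n), (branching_basis (lps_rules n) 2 (@lps_measure n)).
split; first exact: lps_presentation.
exact: branching_basis_homotopy_basis (@lps_rules_lhs_size n) (@lps_measure_rule n)
  (@nf_lps_rule n) (@nf_lps_irreducible n).
Qed.
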